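(* For all positive integers $d,k$ and every real $q\ge 1$ there exists $q'_0$ such that for every $q'\ge q'_0$ the following holds. Let $X$ be a subset of $\mathbb Q^d_q \cap B^d(\mathbf 0, 2k)$. Then for any $\mathbf x \in CH(X) \cap \mathbb Q_q^d$ there exist $\lambda_1, \dots, \lambda_r \geq 0$ and $\mathbf x_1, \dots, \mathbf x_r \in X$ such that $r \leq d+1$, each $\lambda_j$ is $q'$-rational, $\sum_{j \in [r]} \lambda_{j} =1$, and $\mathbf x = \sum_{j \in [r]} \lambda_j \mathbf x_j$.
   Context: A real number $x$ is $q$-rational if $x=a/b$ for integers $a,b$ with $1\le b\le q$. $\mathbb Q^d_q$ is the set of points of $\mathbb R^d$ all of whose coordinates are $q$-rational. $B^d(\mathbf x,r)=\{\mathbf z\in\mathbb R^d:\|\mathbf z-\mathbf x\|\le r\}$. $CH(X)$ is the convex hull of $X$, i.e. the set of finite convex combinations $\sum_j\lambda_j\mathbf x_j$ with $\mathbf x_j\in X$, $\lambda_j\in[0,1]$, $\sum_j\lambda_j=1$. *)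

From HB Require Import structures.
From mathcomp Require Import all_boot all_order all_algebra.
From mathcomp Require Import reals.
Set Implicit Arguments. Unset Strict Implicit. Unset Printing Implicit Defensive.
Import Order.TTheory GRing.Theory Num.Theory.
Local Open Scope ring_scope.

Definition qrational (R : realType) (q x : R) : Prop :=
  exists (a : int) (b : int), 1 <= b /\ b%:~R <= q /\ x = a%:~R / b%:~R.

Definition qrat_pt (R : realType) (d : nat) (q : R) (x : 'rV[R]_d) : Prop :=
  forall i : 'I_d, qrational q (x 0 i).

Definition enorm (R : realType) (d : nat) (v : 'rV[R]_d) : R :=
  Num.sqrt (\sum_(i < d) v 0 i ^+ 2).

Definition ball_cl (R : realType) (d : nat) (x : 'rV[R]_d) (r : R)
  (z : 'rV[R]_d) : Prop := enorm (z - x) <= r.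

Definition CH (R : realType) (d : nat) (X : 'rV[R]_d -> Prop) (x : 'rV[R]_d)
  : Prop :=
  exists (n : nat) (lam : 'I_n -> R) (xs : 'I_n -> 'rV[R]_d),
    (forall j, X (xs j)) /\ (forall j, 0 <= lam j <= 1) /\
    \sum_(j < n) lam j = 1 /\ x = \sum_(j < n) lam j *: xs j.

(* Lift each point y to the vector (1, N! y) of R^(d+1), where N > q, so that
   lifts of points of Q^d_q are integral.  A convex combination becomes a
   nonnegative combination of lifts, and by conic Caratheodory we may keep only
   linearly independent lifts, at most d+1 of them.  The weights mu then solve
   mu B = c with B, c integral and B of full row rank; Cramer's rule for the
   Gram matrix B B^T makes det (B B^T) * mu integral, and the entries of B are
   bounded, so det (B B^T) is bounded in terms of d, k and q only. *)
From HB Require Import structures.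
From mathcomp Require Import all_boot all_order all_algebra.
From mathcomp Require Import reals perm zify ring.
Import Order.TTheory GRing.Theory Num.Theory.
Local Open Scope ring_scope.

Section IntegralMatrices.
Context {R : comNzRingType} {S : subringClosed R}.

Lemma det_mxOver {n} {A : 'M[R]_n} : A \is a mxOver S -> \det A \in S.
Proof.
move=> /mxOverP AS; apply: rpred_sum => s _; rewrite rpredM ?rpredX ?rpredN1 //.
by apply: rpred_prod => i _; apply: AS.
Qed.

Lemma adj_mxOver {n} {A : 'M[R]_n} : A \is a mxOver S -> \adj A \is a mxOver S.
Proof.
move=> /mxOverP AS; apply/mxOverP => i j; rewrite mxE rpredM ?rpredX ?rpredN1 //.
by apply/det_mxOver/mxOverP => k l; rewrite !mxE.
Qed.

Lemma trmx_mxOver {m n} {A : 'M[R]_(m, n)} : A \is a mxOver S -> A^T \is a mxOver S.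
Proof. by move=> /mxOverP AS; apply/mxOverP => i j; rewrite mxE. Qed.

(* Cramer's rule without division: [u G adj G = det G *: u] for the Gram matrix [G = B B^T]. *)
Lemma scale_det_gram_mxOver {r m} {B : 'M[R]_(r, m)} {u : 'rV[R]_r} :
  B \is a mxOver S -> u *m B \is a mxOver S ->
  \det (B *m B^T) *: u \is a mxOver S.
Proof.
move=> BS uBS; have BtS := trmx_mxOver BS.
rewrite -mul_mx_scalar -mul_mx_adj !mulmxA.
by apply: mxOverM; [exact: mxOverM | apply: adj_mxOver; exact: mxOverM].
Qed.

End IntegralMatrices.

Section Caratheodory.
Context {R : realFieldType}.

Lemma det_gram_neq0 {r m} (B : 'M[R]_(r, m)) : row_free B -> \det (B *m B^T) != 0.
Proof.
move=> freeB; rewrite -unitfE -unitmxE -row_free_unit; apply: inj_row_free => u.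
rewrite mulmxA => uBBt0.
have ww0 : u *m B *m (u *m B)^T = 0 by rewrite trmx_mul mulmxA uBBt0 mul0mx.
apply/eqP; rewrite -(mulmx_free_eq0 _ freeB); move: (u *m B) ww0 => w /matrixP/(_ 0 0).
rewrite !mxE => /eqP; rewrite psumr_eq0 => [/allP w0|l _]; last by rewrite mxE -expr2 sqr_ge0.
apply/eqP/rowP => l; have /w0 := mem_index_enum l.
by rewrite mxE -expr2 sqrf_eq0 mxE => /eqP.
Qed.

Lemma conic_dependency {m n} (v : 'I_n -> 'rV[R]_m) :
  ~~ row_free (\matrix_j v j) ->
  exists2 u : 'I_n -> R, exists j, 0 < u j & \sum_j u j *: v j = 0.
Proof.
rewrite -kermx_eq0 => /rowV0Pn[w /sub_kermxP]; rewrite mulmx_sum_row.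
under eq_bigr do rewrite rowK; move=> wv0.
case/rV0Pn => j; rewrite neq_lt => /orP[wj_lt0|wj_gt0].
  exists (fun i => - w 0 i); first by exists j; rewrite oppr_gt0.
  by under eq_bigr do rewrite scaleNr; rewrite sumrN wv0 oppr0.
by exists (fun i => w 0 i); first by exists j.
Qed.

(* Moving along a dependency [u] until the first weight vanishes; [s] is the
   largest ratio [u j / lam j], attained at [i0]. *)
Lemma conic_comb_drop {m n} (v : 'I_n.+1 -> 'rV[R]_m) (lam : 'I_n.+1 -> R) :
  (forall j, 0 <= lam j) -> ~~ row_free (\matrix_j v j) ->
  exists i0 (mu : 'I_n.+1 -> R), [/\ forall j, 0 <= mu j, mu i0 = 0 &
    \sum_j lam j *: v j = \sum_j mu j *: v j].
Proof.
move=> lam0 /conic_dependency[u [j1 uj1_gt0] uv0].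
have [i0 /eqP lam_i0 | lam_neq0] := pickP (fun j => lam j == 0).
  by exists i0, lam.
have lam_gt0 j : 0 < lam j by rewrite lt_def lam_neq0 lam0.
have [i0 _ i0max] := @arg_maxP _ _ _ ord0 xpredT (fun j => u j / lam j) isT.
set s := u i0 / lam i0 in i0max.
have s_gt0 : 0 < s by apply: lt_le_trans (i0max j1 isT); rewrite divr_gt0.
have ui0_neq0 : u i0 != 0 by apply: contraTneq s_gt0 => ui0; rewrite /s ui0 mul0r ltxx.
exists i0, (fun j => lam j - u j / s); split.
- move=> j; rewrite subr_ge0 ler_pdivrMr // mulrC -ler_pdivrMr //; exact: i0max.
- by rewrite /s invf_div mulrCA divff ?mulr1 ?subrr.
- under [RHS]eq_bigr do rewrite scalerBl mulrC -scalerA.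
  by rewrite sumrB -scaler_sumr uv0 scaler0 subr0.
Qed.

Lemma conic_caratheodory {m n} (v : 'I_n -> 'rV[R]_m) (lam : 'I_n -> R) :
  (forall j, 0 <= lam j) ->
  exists r (f : 'I_r -> 'I_n) (mu : 'I_r -> R), [/\ forall j, 0 <= mu j,
    \sum_j lam j *: v j = \sum_j mu j *: v (f j) &
    row_free (\matrix_j v (f j))].
Proof.
elim: n v lam => [|n IHn] v lam lam0.
  by exists 0%N, id, lam; split; rewrite // /row_free -leqn0 rank_leq_row.
have [freev|/(conic_comb_drop v lam lam0)[i0 [mu [mu0 mu_i0 ->]]]] :=
  boolP (row_free (\matrix_j v j)); first by exists n.+1, id, lam.
have [r [f [nu [nu0 Enu freef]]]] := IHn (v \o lift i0) (mu \o lift i0) (fun j => mu0 _).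
exists r, (lift i0 \o f), nu; split => //.
by rewrite (bigD1_ord i0) //= mu_i0 scale0r add0r.
Qed.

End Caratheodory.

Lemma normr_det_le {R : numDomainType} {n} (A : 'M[R]_n) (M : R) :
  (forall i j, `|A i j| <= M) -> `|\det A| <= n`!%:R * M ^+ n.
Proof.
move=> AM; apply: le_trans (ler_norm_sum _ _ _) _.
apply: le_trans (_ : \sum_(s : 'S_n) M ^+ n <= _); last first.
  by rewrite sumr_const card_Sn mulr_natl.
apply: ler_sum => s _.
rewrite normrM normr_sign mul1r normr_prod -[n in M ^+ n]card_ord -prodr_const.
by apply: ler_prod => i _; rewrite normr_ge0 AM.
Qed.

Lemma normr_gram_le {R : numDomainType} {r m} (B : 'M[R]_(r, m)) (M : R) :
  (forall i j, `|B i j| <= M) -> forall i j, `|(B *m B^T) i j| <= m%:R * M ^+ 2.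
Proof.
move=> BM i j; rewrite mxE; apply: le_trans (ler_norm_sum _ _ _) _.
apply: le_trans (_ : \sum_(l < m) M ^+ 2 <= _); last first.
  by rewrite sumr_const card_ord mulr_natl.
apply: ler_sum => l _.
by rewrite mxE normrM expr2 ler_pM ?normr_ge0 ?BM.
Qed.

Lemma qrational_fact_mul_int {R : realType} (q y : R) (N : nat) :
  q <= N%:R -> qrational q y -> N`!%:R * y \is a Num.int.
Proof.
move=> qN [a [b [b_ge1 [bq ->]]]]; case: b b_ge1 bq => // b.
rewrite lez_nat => b_gt0 bq.
have /dvdnP[c ->] : (b %| N`!)%N.
  by rewrite dvdn_fact // b_gt0 -(ler_nat R) (le_trans bq).
apply/intrP; exists (c%:Z * a); rewrite natrM rmorphM /= pmulrn.
by field; rewrite pnatr_eq0 -lt0n.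
Qed.

Lemma qrational_of_int_mul {R : realType} (q a z : R) :
  z \is a Num.int -> z != 0 -> `|z| <= q -> z * a \is a Num.int ->
  qrational q a.
Proof.
move=> /intrP[b ->] b0 bq /intrP[c za].
have aE : a = c%:~R / b%:~R by rewrite -za mulrAC divff ?mul1r.
have b_neq0 : b != 0 by apply: contraNneq b0 => ->.
have [b_lt0|b_ge0] := ltP b 0.
  exists (- c), (- b); split; first lia.
  by split; [rewrite -intr_norm ltr0_norm in bq | rewrite aE !intrN invrN mulrNN].
exists c, b; split; first lia.
by split; [rewrite -intr_norm ger0_norm in bq | exact: aE].
Qed.

Definition homog {R : nzRingType} {d : nat} (L : R) (y : 'rV[R]_d) : 'rV[R]_(1 + d) :=
  row_mx 1 (L *: y).

Lemma sum_homog {R : comNzRingType} {d n} (L : R) (a : 'I_n -> R) (y : 'I_n -> 'rV[R]_d) :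
  \sum_j a j *: homog L (y j) = row_mx (\sum_j a j)%:M (L *: \sum_j a j *: y j).
Proof.
apply/rowP => l; rewrite summxE !mxE; under eq_bigr do rewrite !mxE.
case: split => l'; rewrite !mxE; first by rewrite ord1 eqxx -mulr_suml mulr1.
by rewrite summxE mulr_sumr; apply: eq_bigr => j _; rewrite !mxE mulrCA.
Qed.

Lemma sum_homogE {R : fieldType} {d n} (L : R) (a : 'I_n -> R)
    (y : 'I_n -> 'rV[R]_d) (x : 'rV[R]_d) : L != 0 ->
  \sum_j a j *: homog L (y j) = homog L x <->
  \sum_j a j = 1 /\ x = \sum_j a j *: y j.
Proof.
move=> L0; rewrite sum_homog; split => [/eq_row_mx[/rowP/(_ 0) a1 /(scalerI L0) ->]|[a1 ->]].
  by move: a1; rewrite !mxE eqxx mulr1n.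
by rewrite a1.
Qed.

Lemma homog_mxOver_int {R : realType} {d} {q : R} {N : nat} {y : 'rV[R]_d} :
  q <= N%:R -> qrat_pt q y -> homog N`!%:R y \is a mxOver Num.int.
Proof.
move=> qN yq; apply/mxOverP => i l; rewrite ord1 mxE.
case: split => l'; rewrite !mxE; first by rewrite rpred_nat.
exact: qrational_fact_mul_int (yq l').
Qed.

Lemma ball_cl0_coord_le {R : realType} {d} (K : R) (y : 'rV[R]_d) :
  ball_cl 0 K y -> forall l, `|y 0 l| <= K.
Proof.
rewrite /ball_cl /enorm subr0 => yK l; apply: le_trans yK.
rewrite -sqrtr_sqr ler_sqrt; last by apply: sumr_ge0 => i _; rewrite sqr_ge0.
by rewrite (bigD1 l) //= lerDl sumr_ge0 // => i _; rewrite sqr_ge0.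
Qed.

Lemma normr_homog_le {R : realType} {d} (L K : R) (y : 'rV[R]_d) :
  0 <= L -> ball_cl 0 K y -> forall l, `|homog L y 0 l| <= L * K + 1.
Proof.
move=> L0 yK l; have K0 : 0 <= K by apply: le_trans yK; rewrite sqrtr_ge0.
rewrite mxE; case: split => l'; rewrite !mxE.
  by rewrite ord1 eqxx normr1 lerDr mulr_ge0.
rewrite normrM ger0_norm // -[X in X <= _]addr0 lerD ?ler_wpM2l //.
exact: ball_cl0_coord_le.
Qed.

Lemma conic_weights_qrational {R : realType} {r m} {v : 'I_r -> 'rV[R]_m}
    {mu : 'I_r -> R} {q : R} (B := \matrix_j v j) :
  row_free B -> B \is a mxOver Num.int -> \sum_j mu j *: v j \is a mxOver Num.int ->
  `|\det (B *m B^T)| <= q -> forall j, qrational q (mu j).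
Proof.
move=> freeB Bint muv_int detq j.
have muB : (\row_j mu j) *m B = \sum_j mu j *: v j.
  by rewrite mulmx_sum_row; apply: eq_bigr => i _; rewrite rowK mxE.
have /mxOverP/(_ 0 j) := scale_det_gram_mxOver Bint (etrans (congr1 _ muB) muv_int).
rewrite !mxE => det_mu_int; apply: qrational_of_int_mul det_mu_int => //.
- exact/det_mxOver/mxOverM/trmx_mxOver.
- exact: det_gram_neq0.
Qed.

Theorem proposition3p2 (R : realType) (d k : nat) (hd : (0 < d)%N) (hk : (0 < k)%N)
  (q : R) (hq : 1 <= q) :
  exists q0 : R, forall q' : R, q0 <= q' ->
  forall X : 'rV[R]_d -> Prop,
    (forall y, X y -> qrat_pt q y /\ ball_cl 0 (2 * k%:R) y) ->
  forall x : 'rV[R]_d, CH X x -> qrat_pt q x ->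
  exists (r : nat) (lam : 'I_r -> R) (xs : 'I_r -> 'rV[R]_d),
    (r <= d.+1)%N /\
    (forall j, 0 <= lam j) /\ (forall j, X (xs j)) /\
    (forall j, qrational q' (lam j)) /\
    \sum_(j < r) lam j = 1 /\ x = \sum_(j < r) lam j *: xs j.
Proof.
pose N := (Num.truncn q).+1; have qN : q <= N%:R by apply/ltW/truncnS_gt.
pose L : R := N`!%:R; have L_gt0 : 0 < L by rewrite ltr0n fact_gt0.
have L_neq0 : L != 0 := lt0r_neq0 L_gt0.
pose M := L * (2 * k%:R) + 1; have M_ge1 : 1 <= M by rewrite /M lerDr !mulr_ge0 // ltW.
exists ((d.+1)`!%:R * ((d.+1)%:R * M ^+ 2) ^+ d.+1).
move=> q' q'_ge X Xq x [n [lam [xs [xsX [lam01 [lam1 xE]]]]]] xq.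
have lam0 j : 0 <= lam j by case/andP: (lam01 j).
have [r [f [mu [mu0 Emu freef]]]] := conic_caratheodory (fun j => homog L (xs j)) lam lam0.
have muE : \sum_j mu j *: homog L (xs (f j)) = homog L x.
  by rewrite -Emu; apply/(sum_homogE _ _ _ _ L_neq0).
have [mu1 x_muE] := (sum_homogE L mu (xs \o f) x L_neq0).1 muE.
set B := \matrix_j homog L (xs (f j)) in freef.
have Bint : B \is a mxOver Num.int.
  by apply/mxOverP => i l; rewrite mxE; apply/mxOverP/(homog_mxOver_int qN (Xq _ (xsX _)).1).
have BM i l : `|B i l| <= M.
  by rewrite mxE; apply: normr_homog_le (ltW L_gt0) (Xq _ (xsX _)).2 l.
have r_le : (r <= d.+1)%N by move: freef; rewrite /row_free => /eqP <-; apply: rank_leq_col.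
exists r, mu, (xs \o f); do !split => //; first by move=> j; apply: xsX.
apply: (conic_weights_qrational freef Bint); first by rewrite muE (homog_mxOver_int qN xq).
apply: le_trans (normr_det_le _ _ (normr_gram_le _ _ BM)) (le_trans _ q'_ge).
have base_ge1 : 1 <= (d.+1)%:R * M ^+ 2 by rewrite mulr_ege1 ?ler1n ?exprn_ege1.
by rewrite ler_pM ?exprn_ge0 ?ler_nat ?leq_fact ?ler_weXn2l // (le_trans ler01).
Qed.
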